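(* Let $\mathcal{H}=(V,\vec H,\bm{w})$ be a finite, loopless, strongly connected, weighted directed hypergraph with $|V|\ge2$. For every hyperedge $h\in\vec H$, the function $\alpha\mapsto\kappa_\alpha(h)$ is concave on $[0,1]$.
   Context: A weighted directed hypergraph $(V,\vec H,\bm{w})$ has a finite vertex set $V$, a finite set $\vec H$ of hyperedges, each an ordered pair $h=(A_h,B_h)$ of nonempty subsets of $V$ (input and output), and positive weights $w_h>0$. It is loopless if $A_h\cap B_h=\emptyset$ for all $h$. A directed path from $u$ to $v$ is a sequence of hyperedges $h_1,\dots,h_l$ with $u\in A_{h_1}$, $v\in B_{h_l}$ and $B_{h_j}\cap A_{h_{j+1}}\ne\emptyset$ for $1\le j\le l-1$; the hypergraph is strongly connected if for all distinct $u,v$ there is a directed path from $u$ to $v$. The quasi-distance is $d(u,v)=\inf_\gamma\sum_{h\in\gamma}w_h$ over directed paths from $u$ to $v$ ($u\ne v$), $d(u,u)=0$. For $h=(A_h,B_h)$, $L(h)=\min_{x\in A_h,y\in B_h}d(x,y)$. Neighborhoods: $\Gamma^{in}(v)=\{z:\exists h'\text{ with }v\in B_{h'},z\in A_{h'}\}$, $\Gamma^{out}(v)=\{z:\exists h'\text{ with }v\in A_{h'},z\in B_{h'}\}$. For $h$ with $A_h=\{x_1,\dots,x_n\}$, $B_h=\{y_1,\dots,y_m\}$ and $\alpha\in[0,1]$, define $\mu^\alpha_{A_h}=\sum_{i=1}^n\mu^\alpha_{x_i}$ where $\mu^\alpha_{x_i}(x_i)=\alpha/n$, $\mu^\alpha_{x_i}(z)=(1-\alpha)\sum_{h':x_i\in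 B_{h'},z\in A_{h'}}\frac{1}{n|A_{h'}|}\frac{w_{h'}}{\sum_{h'':x_i\in B_{h''}}w_{h''}}$ for $z\in\Gamma^{in}(x_i)$, and $0$ otherwise; and $\mu^\alpha_{B_h}=\sum_{j=1}^m\mu^\alpha_{y_j}$ where $\mu^\alpha_{y_j}(y_j)=\alpha/m$, $\mu^\alpha_{y_j}(z)=(1-\alpha)\sum_{h':y_j\in A_{h'},z\in B_{h'}}\frac{1}{m|B_{h'}|}\frac{w_{h'}}{\sum_{h'':y_j\in A_{h''}}w_{h''}}$ for $z\in\Gamma^{out}(y_j)$, and $0$ otherwise. These are probability measures on $V$. For probability measures $\mu,\nu$, $W(\mu,\nu)=\inf_\pi\sum_{u,v\in V}\pi(u,v)d(u,v)$ over couplings $\pi$ (with $\sum_v\pi(u,v)=\mu(u)$, $\sum_u\pi(u,v)=\nu(v)$). Finally $\kappa_\alpha(h)=1-\frac{W(\mu^\alpha_{A_h},\mu^\alpha_{B_h})}{L(h)}$. *)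

From HB Require Import structures.
From mathcomp Require Import all_boot all_order all_algebra.
From mathcomp Require Import boolp classical_sets reals.
Set Implicit Arguments. Unset Strict Implicit. Unset Printing Implicit Defensive.
Import Order.TTheory GRing.Theory Num.Theory.
Local Open Scope classical_set_scope.
Local Open Scope ring_scope.

(* a hyperedge is an ordered pair (A_h, B_h) of subsets of V *)
Notation hedge V := ({set V} * {set V})%type.

Section Hyper.
Variables (R : realType) (V : finType).

Variables (H : {set hedge V}) (w : hedge V -> R).

Definition is_dpath (u v : V) (h : hedge V) (t : seq (hedge V)) : Prop :=
  [/\ all (fun g => g \in H) (h :: t),
      u \in h.1, v \in (last h t).2 &
      path (fun g g' : hedge V => [exists z, (z \in g.2) && (z \in g'.1)]) h t].

Definition path_weight (s : seq (hedge V)) : R := \sum_(g <- s) w g.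

Definition hdist (u v : V) : R :=
  if u == v then 0
  else inf [set r | exists h t, is_dpath u v h t /\ r = path_weight (h :: t)].

Definition hloopless : Prop := forall h, h \in H -> (forall x, x \in h.1 -> x \notin h.2).

Definition hstrongly_connected : Prop :=
  forall u v : V, u != v -> exists h t, is_dpath u v h t.

Definition hedgeL (h : hedge V) : R :=
  inf [set r | exists x y, [/\ x \in h.1, y \in h.2 & r = hdist x y]].

(* mu^alpha_{x_i} for x_i in A_h, n = |A_h| *)
Definition mu_in (alpha : R) (n : nat) (x z : V) : R :=
  if z == x then alpha / n%:R
  else (1 - alpha) *
    \sum_(h' in H | (x \in h'.2) && (z \in h'.1))
      (1 / (n%:R * #|h'.1|%:R)) *
      (w h' / \sum_(h'' in H | x \in h''.2) w h'').

(* mu^alpha_{y_j} for y_j in B_h, m = |B_h| *)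
Definition mu_out (alpha : R) (m : nat) (y z : V) : R :=
  if z == y then alpha / m%:R
  else (1 - alpha) *
    \sum_(h' in H | (y \in h'.1) && (z \in h'.2))
      (1 / (m%:R * #|h'.2|%:R)) *
      (w h' / \sum_(h'' in H | y \in h''.1) w h'').

Definition muA (alpha : R) (h : hedge V) (z : V) : R :=
  \sum_(x in h.1) mu_in alpha #|h.1| x z.

Definition muB (alpha : R) (h : hedge V) (z : V) : R :=
  \sum_(y in h.2) mu_out alpha #|h.2| y z.

Definition is_coupling (mu nu : V -> R) (pi : V -> V -> R) : Prop :=
  [/\ forall u v, 0 <= pi u v,
      forall u, \sum_v pi u v = mu u &
      forall v, \sum_u pi u v = nu v].

Definition wasserstein (mu nu : V -> R) : R :=
  inf [set c | exists pi, is_coupling mu nu pi /\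
                 c = \sum_u \sum_v pi u v * hdist u v].

Definition kappa (alpha : R) (h : hedge V) : R :=
  1 - wasserstein (muA alpha h) (muB alpha h) / hedgeL h.

End Hyper.

Definition concave_on01 (R : realType) (f : R -> R) : Prop :=
  forall a b t : R, 0 <= a <= 1 -> 0 <= b <= 1 -> 0 <= t <= 1 ->
    t * f a + (1 - t) * f b <= f (t * a + (1 - t) * b).

(** For fixed [h], both [mu^alpha_{A_h}] and [mu^alpha_{B_h}] are affine in
    [alpha], and the transport cost is linear in the coupling, so a convex
    combination of optimal couplings for [alpha = a] and [alpha = b] is a
    coupling for the combined parameter: [alpha |-> W] is convex.  Dividing by
    the constant [L(h) >= 0] and subtracting from [1] gives concavity. *)

From HB Require Import structures.
From mathcomp Require Import all_boot all_order all_algebra.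
From mathcomp Require Import boolp classical_sets reals.
From mathcomp Require Import ring lra zify.
Set Implicit Arguments. Unset Strict Implicit.
Import Order.TTheory GRing.Theory Num.Theory.
Local Open Scope classical_set_scope.
Local Open Scope ring_scope.

Lemma sum_card_members (R : nmodType) (I J : finType) (B : {pred I}) (P : pred I)
    (A : I -> {set J}) (F : I -> R) :
  \sum_(z : J) \sum_(i in B | P i && (z \in A i)) F i =
  \sum_(i in B | P i) F i *+ #|A i|.
Proof.
have mkcond z : \sum_(i in B | P i && (z \in A i)) F i =
    \sum_(i in B | P i) (if z \in A i then F i else 0).
  by rewrite -big_mkcondr; apply: eq_bigl => i; rewrite andbA.
under eq_bigr => z _ do rewrite mkcond.
rewrite exchange_big; apply: eq_bigr => i _.
by rewrite -big_mkcond sumr_const; congr (_ *+ _); apply: eq_card.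
Qed.

Lemma inf_ge0 (R : realType) (E : set R) : (forall x, E x -> 0 <= x) -> 0 <= inf E.
Proof.
move=> E0; have [[E_neq0 _]|E_noinf] := pselect (has_inf E); first exact: lb_le_inf.
by rewrite inf_out.
Qed.

Lemma exists_neq (V : finType) (x : V) : (1 < #|V|)%N -> exists u, u != x.
Proof.
move=> cardV; have : (0 < #|[set~ x]%SET|)%N by rewrite cardsC1; lia.
by rewrite card_gt0 => /set0Pn[u]; rewrite in_setC1; exists u.
Qed.

(* If [L = 0] both sides equal [1], because [W / 0 = 0]. *)
Lemma concave_one_sub_div (R : realFieldType) (L Wa Wb Wt t : R) :
  0 <= L -> Wt <= t * Wa + (1 - t) * Wb ->
  t * (1 - Wa / L) + (1 - t) * (1 - Wb / L) <= 1 - Wt / L.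
Proof.
move=> L0 convW; have [->|Ln0] := eqVneq L 0.
  by rewrite invr0 !mulr0 !subr0 !mulr1; lra.
have -> : t * (1 - Wa / L) + (1 - t) * (1 - Wb / L) = 1 - (t * Wa + (1 - t) * Wb) / L.
  by ring.
by rewrite lerD2l lerN2 ler_pM2r // invr_gt0 lt0r Ln0.
Qed.

Lemma product_coupling (R : realType) (V : finType) (mu nu : V -> R) :
  (forall z, 0 <= mu z) -> (forall z, 0 <= nu z) ->
  \sum_z mu z = 1 -> \sum_z nu z = 1 ->
  is_coupling mu nu (fun u v => mu u * nu v).
Proof.
move=> mu0 nu0 mu1 nu1; split.
- by move=> u v; apply: mulr_ge0.
- by move=> u; rewrite -mulr_sumr nu1 mulr1.
- by move=> v; rewrite -mulr_suml mu1 mul1r.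
Qed.

Lemma is_coupling_convex (R : realType) (V : finType) (mu1 nu1 mu2 nu2 : V -> R)
    (pi1 pi2 : V -> V -> R) (t : R) :
  0 <= t <= 1 -> is_coupling mu1 nu1 pi1 -> is_coupling mu2 nu2 pi2 ->
  is_coupling (fun z => t * mu1 z + (1 - t) * mu2 z)
              (fun z => t * nu1 z + (1 - t) * nu2 z)
              (fun u v => t * pi1 u v + (1 - t) * pi2 u v).
Proof.
move=> /andP[t0 t1] [pi1_ge0 pi1_mu pi1_nu] [pi2_ge0 pi2_mu pi2_nu]; split.
- by move=> u v; apply: addr_ge0; apply: mulr_ge0 => //; lra.
- by move=> u; rewrite big_split /= -!mulr_sumr pi1_mu pi2_mu.
- by move=> v; rewrite big_split /= -!mulr_sumr pi1_nu pi2_nu.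
Qed.

Section Hypergraph.
Variables (R : realType) (V : finType) (H : {set hedge V}) (w : hedge V -> R).
Hypothesis w_gt0 : forall h, h \in H -> 0 < w h.

(* [mu_in] and [mu_out] are the instances [(p, q) = (snd, fst)] and
   [(p, q) = (fst, snd)]: [p] is the side of [g] on which [x] lies, [q] the
   side carrying the neighbours [z]. *)
Definition vertex_measure (p q : hedge V -> {set V}) (alpha : R) (n : nat)
    (x z : V) : R :=
  if z == x then alpha / n%:R
  else (1 - alpha) *
    \sum_(g in H | (x \in p g) && (z \in q g))
      (1 / (n%:R * #|q g|%:R)) * (w g / \sum_(g' in H | x \in p g') w g').

Definition set_measure (p q : hedge V -> {set V}) (alpha : R) (A : {set V})
    (z : V) : R :=
  \sum_(x in A) vertex_measure p q alpha #|A| x z.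

Lemma muA_set_measure alpha h : muA H w alpha h = set_measure snd fst alpha h.1.
Proof. by []. Qed.

Lemma muB_set_measure alpha h : muB H w alpha h = set_measure fst snd alpha h.2.
Proof. by []. Qed.

Section Measures.
Variables (p q : hedge V -> {set V}).

Lemma vertex_measure_affine a b t n x z :
  vertex_measure p q (t * a + (1 - t) * b) n x z =
  t * vertex_measure p q a n x z + (1 - t) * vertex_measure p q b n x z.
Proof. by rewrite /vertex_measure; case: eqP => _; ring. Qed.

Lemma set_measure_affine a b t A :
  set_measure p q (t * a + (1 - t) * b) A =
  (fun z => t * set_measure p q a A z + (1 - t) * set_measure p q b A z).
Proof.
apply: funext => z; rewrite /set_measure.
under eq_bigr do rewrite vertex_measure_affine.
by rewrite big_split /= -!mulr_sumr.
Qed.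

Lemma vertex_measure_ge0 alpha n x z :
  0 <= alpha <= 1 -> 0 <= vertex_measure p q alpha n x z.
Proof.
move=> /andP[a0 a1]; rewrite /vertex_measure; case: eqP => _.
  exact: divr_ge0.
apply: mulr_ge0; first lra.
apply: sumr_ge0 => g /andP[gH _]; apply: mulr_ge0.
  by apply: divr_ge0 => //; apply: mulr_ge0.
apply: divr_ge0; first exact/ltW/w_gt0.
by apply: sumr_ge0 => g' /andP[g'H _]; apply/ltW/w_gt0.
Qed.

Hypothesis pq_disjoint : forall g x, g \in H -> x \in p g -> x \notin q g.
Hypothesis q_neq0 : forall g, g \in H -> q g != finset.set0.

(* The weights [w g / S] of the hyperedges through [x] sum to [1], and each
   is spread uniformly over the [#|q g|] neighbours. *)
Lemma sum_vertex_measure alpha n x :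
  (exists2 g, g \in H & x \in p g) ->
  \sum_z vertex_measure p q alpha n x z = n%:R^-1.
Proof.
move=> [g0 g0H xg0].
set S := \sum_(g in H | x \in p g) w g.
have S_gt0 : 0 < S.
  rewrite /S (bigD1 g0) /=; last by rewrite g0H.
  apply: ltr_pwDl; first exact: w_gt0.
  by apply: sumr_ge0 => g /andP[/andP[gH _] _]; apply/ltW/w_gt0.
set f := fun g => 1 / (n%:R * #|q g|%:R) * (w g / S).
set T := fun z => \sum_(g in H | (x \in p g) && (z \in q g)) f g.
have Tx : T x = 0.
  apply: big_pred0 => g; apply/negP => /andP[gH /andP[xp xq]].
  by move: (pq_disjoint gH xp); rewrite xq.
have splitE z :
    vertex_measure p q alpha n x z = (z == x)%:R * (alpha / n%:R) + (1 - alpha) * T z.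
  rewrite /vertex_measure -/S; case: eqP => [->|_]; last by rewrite mul0r add0r.
  by rewrite Tx mulr0 addr0 mul1r.
have sumT : \sum_z T z = n%:R^-1.
  have f_card g : g \in H -> f g *+ #|q g| = w g / S / n%:R.
    move=> gH; have qg0 : #|q g|%:R != 0 :> R by rewrite pnatr_eq0 cards_eq0 q_neq0.
    by rewrite /f -mulr_natr mul1r invfM mulrAC mulfVK // mulrC.
  rewrite /T sum_card_members (eq_bigr _ (fun g gH => f_card g (andP gH).1)).
  by rewrite -!mulr_suml -/S divff ?mul1r // gt_eqF.
rewrite (eq_bigr _ (fun z _ => splitE z)) big_split /= -mulr_suml -mulr_sumr sumT.
rewrite (bigD1 x) //= eqxx big1 ?addr0 => [|z /negPf -> //].
by rewrite mul1r -mulrDl addrC subrK mul1r.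
Qed.

Lemma set_measure_ge0 alpha A z : 0 <= alpha <= 1 -> 0 <= set_measure p q alpha A z.
Proof. by move=> ha; apply: sumr_ge0 => x _; apply: vertex_measure_ge0. Qed.

Lemma sum_set_measure alpha A :
  (forall x, exists2 g, g \in H & x \in p g) -> A != finset.set0 ->
  \sum_z set_measure p q alpha A z = 1.
Proof.
move=> p_cover An0; rewrite exchange_big /=.
under eq_bigr => x _ do rewrite sum_vertex_measure //.
by rewrite sumr_const -[_ *+ _]mulr_natr mulVf // pnatr_eq0 cards_eq0.
Qed.

End Measures.

Lemma hdist_ge0 u v : 0 <= hdist H w u v.
Proof.
rewrite /hdist; case: eqP => // _.
apply: inf_ge0 => r [h [t [[allH _ _ _] ->]]].
rewrite /path_weight big_seq; apply: sumr_ge0 => g g_in.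
by apply/ltW/w_gt0; move/allP: allH; apply.
Qed.

Lemma hedgeL_ge0 h : 0 <= hedgeL H w h.
Proof. by apply: inf_ge0 => r [x [y [_ _ ->]]]; apply: hdist_ge0. Qed.

Definition transport_cost (pi : V -> V -> R) : R :=
  \sum_u \sum_v pi u v * hdist H w u v.

Definition transport_costs (mu nu : V -> R) : set R :=
  [set c | exists pi, is_coupling mu nu pi /\ c = transport_cost pi].

Lemma wassersteinE mu nu : wasserstein H w mu nu = inf (transport_costs mu nu).
Proof. by []. Qed.

Lemma transport_cost_ge0 mu nu c : transport_costs mu nu c -> 0 <= c.
Proof.
move=> [pi [[pi_ge0 _ _] ->]].
by apply: sumr_ge0 => u _; apply: sumr_ge0 => v _; apply: mulr_ge0 => //; apply: hdist_ge0.
Qed.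

Lemma transport_cost_convex (pi1 pi2 : V -> V -> R) t :
  transport_cost (fun u v => t * pi1 u v + (1 - t) * pi2 u v) =
  t * transport_cost pi1 + (1 - t) * transport_cost pi2.
Proof.
rewrite /transport_cost !mulr_sumr -big_split; apply: eq_bigr => u _ /=.
by rewrite !mulr_sumr -big_split; apply: eq_bigr => v _ /=; ring.
Qed.

Lemma has_inf_transport_costs mu nu pi :
  is_coupling mu nu pi -> has_inf (transport_costs mu nu).
Proof.
move=> cpl; split; first by exists (transport_cost pi), pi.
by exists 0 => c /transport_cost_ge0.
Qed.

(* Take [e]-optimal couplings at both ends and mix them. *)
Lemma wasserstein_convex (mu1 nu1 mu2 nu2 : V -> R) pi1 pi2 t :
  0 <= t <= 1 -> is_coupling mu1 nu1 pi1 -> is_coupling mu2 nu2 pi2 ->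
  wasserstein H w (fun z => t * mu1 z + (1 - t) * mu2 z)
                  (fun z => t * nu1 z + (1 - t) * nu2 z)
  <= t * wasserstein H w mu1 nu1 + (1 - t) * wasserstein H w mu2 nu2.
Proof.
move=> t01 cpl1 cpl2; rewrite !wassersteinE.
apply/ler_addgt0Pr => e e_gt0.
have [_ [q1 [cq1 ->]] lt1] := inf_adherent e_gt0 (has_inf_transport_costs cpl1).
have [_ [q2 [cq2 ->]] lt2] := inf_adherent e_gt0 (has_inf_transport_costs cpl2).
have [t0 t1] : 0 <= t /\ 0 <= 1 - t by case/andP: t01; split; lra.
apply: (@le_trans _ _ (t * transport_cost q1 + (1 - t) * transport_cost q2)).
  apply: ge_inf; first by exists 0 => c /transport_cost_ge0.
  by exists (fun u v => t * q1 u v + (1 - t) * q2 u v);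
    rewrite transport_cost_convex; split => //; apply: is_coupling_convex.
have -> : forall W1 W2 : R, t * W1 + (1 - t) * W2 + e = t * (W1 + e) + (1 - t) * (W2 + e).
  by move=> W1 W2; ring.
by apply: lerD; apply: ler_wpM2l => //; apply: ltW.
Qed.

Section Connectivity.
Hypotheses (H_sc : hstrongly_connected H) (cardV : (1 < #|V|)%N).

Lemma strongly_connected_cover_out x : exists2 g, g \in H & x \in g.2.
Proof.
have [u ux] := exists_neq x cardV; have [g [s [allH _ x_last _]]] := H_sc ux.
by exists (last g s) => //; move/allP: allH; apply; rewrite mem_last.
Qed.

Lemma strongly_connected_cover_in x : exists2 g, g \in H & x \in g.1.
Proof.
have [u ux] := exists_neq x cardV; rewrite eq_sym in ux.
have [g [s [allH xg _ _]]] := H_sc ux.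
by exists g => //; move/allP: allH; apply; rewrite mem_head.
Qed.

End Connectivity.

Lemma muA_affine a b t h :
  muA H w (t * a + (1 - t) * b) h =
  (fun z => t * muA H w a h z + (1 - t) * muA H w b h z).
Proof. exact: set_measure_affine. Qed.

Lemma muB_affine a b t h :
  muB H w (t * a + (1 - t) * b) h =
  (fun z => t * muB H w a h z + (1 - t) * muB H w b h z).
Proof. exact: set_measure_affine. Qed.

Lemma muA_muB_coupling alpha h :
  (forall g, g \in H -> (g.1 != finset.set0) && (g.2 != finset.set0)) ->
  hloopless H -> hstrongly_connected H -> (1 < #|V|)%N ->
  h \in H -> 0 <= alpha <= 1 ->
  is_coupling (muA H w alpha h) (muB H w alpha h)
              (fun u v => muA H w alpha h u * muB H w alpha h v).
Proof.
move=> H_ne H_loop H_sc cardV hH alpha01.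
have [hA hB] := andP (H_ne h hH).
have loop_rev g x : g \in H -> x \in g.2 -> x \notin g.1.
  by move=> gH x2; apply/negP => x1; move: (H_loop g gH x x1); rewrite x2.
apply: product_coupling => [z|z||]; rewrite ?muA_set_measure ?muB_set_measure.
- exact: set_measure_ge0.
- exact: set_measure_ge0.
- apply: sum_set_measure => // [g gH|x]; first by case/andP: (H_ne g gH).
  exact: strongly_connected_cover_out.
- apply: sum_set_measure => // [g x gH|g gH|x]; first exact: H_loop.
    by case/andP: (H_ne g gH).
  exact: strongly_connected_cover_in.
Qed.

End Hypergraph.

Theorem mainTheorem5 (R : realType) (V : finType)
  (H : {set hedge V}) (w : hedge V -> R) :
  (forall h, h \in H -> (h.1 != finset.set0) && (h.2 != finset.set0)) ->
  (forall h, h \in H -> 0 < w h) ->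
  hloopless H ->
  hstrongly_connected H ->
  (1 < #|V|)%N ->
  forall h, h \in H -> concave_on01 (fun alpha : R => kappa H w alpha h).
Proof.
move=> H_ne w_gt0 H_loop H_sc cardV h hH a b t a01 b01 t01.
have cpl alpha := @muA_muB_coupling R V H w w_gt0 alpha h H_ne H_loop H_sc cardV hH.
rewrite /kappa muA_affine muB_affine.
apply: concave_one_sub_div; first exact: hedgeL_ge0.
exact: wasserstein_convex t01 (cpl a a01) (cpl b b01).
Qed.
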